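(* Let $\alpha > 1$, $\delta \in [0,1)$, $p, q \in [0,1]$, $P = \mathrm{Ber}(p)$, $Q = \mathrm{Ber}(q)$. Then $$D^\delta_\alpha(P\|Q) = \begin{cases} D_\alpha\!\left(\mathrm{Ber}\!\left(\tfrac{p}{1-\delta}\right) \,\Big\|\, \mathrm{Ber}\!\left(\tfrac{q-\delta}{1-\delta}\right)\right) & \text{if } p < q - \delta,\\[4pt] D_\alpha\!\left(\mathrm{Ber}\!\left(\tfrac{p-\delta}{1-\delta}\right) \,\Big\|\, \mathrm{Ber}\!\left(\tfrac{q}{1-\delta}\right)\right) & \text{if } p > q + \delta,\\[4pt] 0 & \text{if } |p - q| \le \delta.\end{cases}$$ Moreover, for fixed $p$, $q \mapsto D^\delta_\alpha(P\|Q)$ is non-increasing on $[0,p]$ and non-decreasing on $[p,1]$; and for fixed $q$, $p \mapsto D^\delta_\alpha(P\|Q)$ is non-increasing on $[0,q]$ and non-decreasing on $[q,1]$.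
   Context: $\mathrm{Ber}(p)$ is the Bernoulli distribution with success probability $p$. For distributions $P,Q$ on a countable set and $\alpha>1$, $D_\alpha(P\|Q) = \frac{1}{\alpha-1}\log\sum_x P(x)^\alpha Q(x)^{1-\alpha}$ (equal to $\infty$ if $P$ is not absolutely continuous w.r.t. $Q$). The approximate Rényi divergence is $D^\delta_\alpha(P\|Q) = \inf\{D_\alpha(P'\|Q') : P = (1-\delta)P' + \delta P'',\ Q = (1-\delta)Q' + \delta Q''\}$, where the infimum is over probability distributions $P', P'', Q', Q''$ on the same space. *)

From HB Require Import structures.
From mathcomp Require Import all_boot all_order all_algebra.
From mathcomp Require Import all_classical all_reals all_analysis.
Set Implicit Arguments. Unset Strict Implicit. Unset Printing Implicit Defensive.
Import Order.TTheory GRing.Theory Num.Theory.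
Local Open Scope ring_scope.
Local Open Scope classical_set_scope.

Definition is_dist (R : realType) (P : bool -> R) : Prop :=
  (forall b, 0 <= P b) /\ P true + P false = 1.

Definition ber (R : realType) (p : R) : bool -> R :=
  fun b => if b then p else 1 - p.

(* Renyi divergence of order alpha on bool (natural log); +oo if P is not
   absolutely continuous w.r.t. Q.  Terms with P b = 0 vanish since
   0 `^ alpha = 0 for alpha > 1. *)
Definition renyi (R : realType) (alpha : R) (P Q : bool -> R) : \bar R :=
  if [exists b, (0 < P b) && (Q b == 0)] then +oo%E
  else ((alpha - 1)^-1 * ln (\sum_(b : bool) P b `^ alpha * Q b `^ (1 - alpha)))%:E.

Definition renyi_approx (R : realType) (alpha delta : R) (P Q : bool -> R) : \bar R :=
  ereal_inf [set d | exists P1 P2 Q1 Q2 : bool -> R,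
    [/\ is_dist P1, is_dist P2, is_dist Q1 & is_dist Q2] /\
    (forall b, P b = (1 - delta) * P1 b + delta * P2 b) /\
    (forall b, Q b = (1 - delta) * Q1 b + delta * Q2 b) /\
    d = renyi alpha P1 Q1].

From HB Require Import structures.
From mathcomp Require Import all_boot all_order all_algebra.
From mathcomp Require Import all_classical all_reals all_analysis.
From mathcomp Require Import ring lra.
Import Order.TTheory GRing.Theory Num.Theory.
Local Open Scope ring_scope.

Set Implicit Arguments.
Unset Strict Implicit.
Unset Printing Implicit Defensive.

(* The Renyi divergence of two Bernoulli laws is an increasing function of the
   Hellinger integral H(x, y) = x^a y^(1-a) + (1-x)^a (1-y)^(1-a), which is
   convex in each argument and minimal, equal to 1, on the diagonal; so
   D_a(Ber x || Ber y) grows as x and y move apart.  If p < q - d, every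
   d-decomposition of (Ber p, Ber q) has main components x <= p/(1-d) and
   y >= (q-d)/(1-d), and this extreme pair is itself admissible, so it attains
   the infimum.  If |p - q| <= d, both laws can be given the same main
   component, hence divergence 0.  Exchanging the two outcomes handles
   p > q + d, and the monotonicity claims follow from the closed form. *)

Section PowerInequalities.
Variable R : realType.
Implicit Types b l s t x y z : R.

Lemma powR_tangent1_le b t : b <= 0 -> 0 < t -> 1 + b * (t - 1) <= t `^ b.
Proof.
move=> b0 t0; rewrite /powR gt_eqF //; apply: le_trans (expR_ge1Dx _).
have ln_le : ln t <= t - 1 by have := @le_ln1Dx R (t - 1); rewrite subrKC; apply; lra.
rewrite lerD2l -subr_ge0 -mulrBr mulr_le0 //; lra.
Qed.

Lemma powR_tangent_le b s t : b <= 0 -> 0 < s -> 0 < t ->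
  s `^ b * (1 + b * (t / s - 1)) <= t `^ b.
Proof.
move=> b0 s0 t0.
have -> : t `^ b = s `^ b * (t / s) `^ b.
  by rewrite -powRM ?ltW ?divr_gt0 // mulrCA divff ?mulr1 // gt_eqF.
by rewrite ler_wpM2l ?powR_ge0 // powR_tangent1_le // divr_gt0.
Qed.

Lemma convex_powR_nonpos b l s t : b <= 0 -> 0 <= l <= 1 -> 0 < s -> 0 < t ->
  (l * s + (1 - l) * t) `^ b <= l * s `^ b + (1 - l) * t `^ b.
Proof.
move=> b0 /andP[l0 l1] s0 t0; set m := l * s + (1 - l) * t.
have m0 : 0 < m by rewrite /m; nra.
have barycenter : l * (s / m) + (1 - l) * (t / m) = 1.
  by rewrite !mulrA -mulrDl divff // gt_eqF.
have := lerD (ler_wpM2l l0 (powR_tangent_le b0 m0 s0))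
             (ler_wpM2l (_ : 0 <= 1 - l) (powR_tangent_le b0 m0 t0)).
have -> : l * (m `^ b * (1 + b * (s / m - 1))) + (1 - l) * (m `^ b * (1 + b * (t / m - 1)))
    = m `^ b * (1 + b * (l * (s / m) + (1 - l) * (t / m) - 1)) by ring.
by rewrite barycenter subrr mulr0 addr0 mulr1; apply; lra.
Qed.

Lemma convex_powR_ge1 a l s t : 1 <= a -> 0 <= l <= 1 -> 0 <= s -> 0 <= t ->
  (l * s + (1 - l) * t) `^ a <= l * s `^ a + (1 - l) * t `^ a.
Proof.
move=> a1 /andP[l0 l1] s0 t0; have := convex_powR a1 (Itv01 l0 l1).
by move=> /(_ s t); rewrite !inE /= !in_itv /= !andbT !convRE; apply.
Qed.

Lemma powR_mul_compl a z : 0 <= z -> z `^ a * z `^ (1 - a) = z.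
Proof. by move=> z0; rewrite -powRD ?subrKC ?powRr1 // oner_eq0. Qed.

Lemma between_convex_comb x y z : x <= y -> y <= z ->
  exists2 l, 0 <= l <= 1 & y = l * x + (1 - l) * z.
Proof.
move=> xy yz; have [xz|xz] := eqVneq x z.
  by exists 0; [rewrite lexx ler01 | rewrite mul0r add0r subr0 mul1r; lra].
have zx0 : 0 < z - x by rewrite subr_gt0 lt_neqAle xz (le_trans xy yz).
exists ((z - y) / (z - x)); last by field; rewrite gt_eqF.
by rewrite divr_ge0 ?ler_pdivrMr //= ?mul1r; lra.
Qed.

End PowerInequalities.

Section BernoulliHellinger.
Variables (R : realType) (al : R).
Hypothesis al_gt1 : 1 < al.
Implicit Types l x y : R.

Definition hellinger x y := x `^ al * y `^ (1 - al) + (1 - x) `^ al * (1 - y) `^ (1 - al).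

Definition ber_ac x y : bool := ((0 < x) ==> (y != 0)) && ((0 < 1 - x) ==> (1 - y != 0)).

Lemma ber_ac_refl x : ber_ac x x.
Proof. by apply/andP; split; apply/implyP => /lt0r_neq0. Qed.

Lemma hellinger_flip x y : hellinger x y = hellinger (1 - x) (1 - y).
Proof. by rewrite /hellinger !subKr addrC. Qed.

Lemma ber_ac_flip x y : ber_ac x y = ber_ac (1 - x) (1 - y).
Proof. by rewrite /ber_ac !subKr andbC. Qed.

Lemma ber_acP x y : 0 <= y <= 1 -> ber_ac x y ->
  (0 < x -> 0 < y) /\ (0 < 1 - x -> 0 < 1 - y).
Proof.
move=> /andP[y0 y1] /andP[/implyP ac1 /implyP ac0].
by split=> [/ac1|/ac0]; rewrite lt0r ?subr_ge0 => -> /=.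
Qed.

Lemma hellinger_diag x : 0 <= x <= 1 -> hellinger x x = 1.
Proof.
by move=> /andP[x0 x1]; rewrite /hellinger !powR_mul_compl ?subrKC // subr_ge0.
Qed.

Lemma hellinger_term_ge x y : 0 <= x -> 0 <= y -> (0 < x -> 0 < y) ->
  x + (1 - al) * (y - x) <= x `^ al * y `^ (1 - al).
Proof.
move=> x0 y0 xy; have [->|xn0] := eqVneq x 0.
  rewrite powR0 ?gt_eqF ?(lt_trans ltr01) // mul0r add0r subr0.
  by rewrite mulr_le0_ge0 // subr_le0 ltW.
have xp : 0 < x by rewrite lt0r xn0.
have -> : x + (1 - al) * (y - x)
          = x `^ al * (x `^ (1 - al) * (1 + (1 - al) * (y / x - 1))).
  by rewrite mulrA powR_mul_compl //; field.
by rewrite ler_wpM2l ?powR_ge0 // powR_tangent_le ?(xy xp) // subr_le0 ltW.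
Qed.

Lemma hellinger_ge1 x y : 0 <= x <= 1 -> 0 <= y <= 1 -> ber_ac x y -> 1 <= hellinger x y.
Proof.
move=> /andP[x0 x1] hy /(ber_acP hy) [ac1 ac0]; case/andP: hy => y0 y1.
apply: le_trans (lerD (hellinger_term_ge x0 y0 ac1) (hellinger_term_ge _ _ ac0));
  rewrite ?subr_ge0 //; lra.
Qed.

Lemma hellinger_convex_l l x1 x2 y : 0 <= l <= 1 -> 0 <= x1 <= 1 -> 0 <= x2 <= 1 ->
  hellinger (l * x1 + (1 - l) * x2) y <= l * hellinger x1 y + (1 - l) * hellinger x2 y.
Proof.
move=> hl /andP[x10 x11] /andP[x20 x21].
have term u v c : 0 <= u -> 0 <= v ->
    (l * u + (1 - l) * v) `^ al * c `^ (1 - al)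
    <= l * (u `^ al * c `^ (1 - al)) + (1 - l) * (v `^ al * c `^ (1 - al)).
  move=> u0 v0; rewrite !mulrA -mulrDl ler_wpM2r ?powR_ge0 //.
  by rewrite convex_powR_ge1 // ltW.
rewrite /hellinger !mulrDr addrACA.
have -> : 1 - (l * x1 + (1 - l) * x2) = l * (1 - x1) + (1 - l) * (1 - x2) by ring.
by apply: lerD; apply: term; rewrite ?subr_ge0.
Qed.

Lemma hellinger_convex_r l x y1 y2 : 0 <= l <= 1 -> 0 <= x <= 1 ->
  0 <= y1 <= 1 -> 0 <= y2 <= 1 -> ber_ac x y1 -> ber_ac x y2 ->
  hellinger x (l * y1 + (1 - l) * y2) <= l * hellinger x y1 + (1 - l) * hellinger x y2.
Proof.
move=> hl /andP[x0 x1] hy1 hy2 /(ber_acP hy1)[ac11 ac10] /(ber_acP hy2)[ac21 ac20].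
have term c u v : 0 <= c -> (0 < c -> 0 < u) -> (0 < c -> 0 < v) ->
    c `^ al * (l * u + (1 - l) * v) `^ (1 - al)
    <= l * (c `^ al * u `^ (1 - al)) + (1 - l) * (c `^ al * v `^ (1 - al)).
  move=> c0 cu cv; have [->|cn0] := eqVneq c 0.
    by rewrite powR0 ?gt_eqF ?(lt_trans ltr01) // !mul0r !mulr0 addr0.
  have cp : 0 < c by rewrite lt0r cn0.
  have -> : l * (c `^ al * u `^ (1 - al)) + (1 - l) * (c `^ al * v `^ (1 - al))
            = c `^ al * (l * u `^ (1 - al) + (1 - l) * v `^ (1 - al)) by ring.
  by rewrite ler_wpM2l ?powR_ge0 // convex_powR_nonpos ?cu ?cv // subr_le0 ltW.
rewrite /hellinger !mulrDr addrACA.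
have -> : 1 - (l * y1 + (1 - l) * y2) = l * (1 - y1) + (1 - l) * (1 - y2) by ring.
by apply: lerD; apply: term; rewrite ?subr_ge0.
Qed.

Lemma hellinger_le_r x y1 y2 : 0 <= x -> x <= y1 -> y1 <= y2 -> y2 <= 1 ->
  ber_ac x y2 -> ber_ac x y1 /\ hellinger x y1 <= hellinger x y2.
Proof.
move=> x0 xy1 y12 y21 ac2.
have hx : 0 <= x <= 1 by apply/andP; lra.
have hy2 : 0 <= y2 <= 1 by apply/andP; lra.
have ac1 : ber_ac x y1.
  have [_ ac20] := ber_acP hy2 ac2.
  apply/andP; split; apply/implyP => pos; apply: lt0r_neq0; first lra.
  by have := ac20 pos; lra.
split=> //; have [l hl y1E] := between_convex_comb xy1 y12.
rewrite y1E; apply: le_trans (hellinger_convex_r hl hx hx hy2 (ber_ac_refl x) ac2) _.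
have := hellinger_ge1 hx hy2 ac2; rewrite hellinger_diag //; case/andP: hl; nra.
Qed.

Lemma hellinger_le_l x1 x2 y : 0 <= x2 -> x2 <= x1 -> x1 <= y -> y <= 1 ->
  ber_ac x2 y -> ber_ac x1 y /\ hellinger x1 y <= hellinger x2 y.
Proof.
move=> x20 x21 x1y y1 ac2.
have hx2 : 0 <= x2 <= 1 by apply/andP; lra.
have hy : 0 <= y <= 1 by apply/andP; lra.
have ac1 : ber_ac x1 y.
  have [_ ac20] := ber_acP hy ac2.
  apply/andP; split; apply/implyP => pos; apply: lt0r_neq0; first lra.
  by have := ac20 (_ : 0 < 1 - x2); lra.
split=> //; have [l hl x1E] := between_convex_comb x21 x1y.
rewrite x1E; apply: le_trans (hellinger_convex_l y hl hx2 hy) _.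
have := hellinger_ge1 hx2 hy ac2; rewrite hellinger_diag //; case/andP: hl; nra.
Qed.

Lemma renyi_berE x y : renyi al (ber x) (ber y) =
  if ber_ac x y then ((al - 1)^-1 * ln (hellinger x y))%:E else +oo%E.
Proof.
rewrite /renyi; have -> : [exists b, (0 < ber x b) && (ber y b == 0)] = ~~ ber_ac x y.
  rewrite /ber_ac negb_and !negb_imply /= !andbT.
  by apply/existsP/orP => [[[] h]|[h|h]]; [left|right|exists true|exists false].
by rewrite if_neg big_bool.
Qed.

Lemma renyi_ber_flip x y : renyi al (ber x) (ber y) = renyi al (ber (1 - x)) (ber (1 - y)).
Proof. by rewrite !renyi_berE -ber_ac_flip -hellinger_flip. Qed.

Lemma renyi_ber_diag x : 0 <= x <= 1 -> renyi al (ber x) (ber x) = 0%E.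
Proof. by move=> hx; rewrite renyi_berE ber_ac_refl hellinger_diag // ln1 mulr0. Qed.

Lemma renyi_ber_ge0 x y : 0 <= x <= 1 -> 0 <= y <= 1 -> (0 <= renyi al (ber x) (ber y))%E.
Proof.
move=> hx hy; rewrite renyi_berE; case: ifPn => // ac.
by rewrite lee_fin mulr_ge0 ?ln_ge0 ?hellinger_ge1 // invr_ge0 subr_ge0 ltW.
Qed.

Lemma le_renyi_ber x1 y1 x2 y2 : 0 <= x2 <= 1 -> 0 <= y2 <= 1 ->
  (ber_ac x1 y1 -> ber_ac x2 y2 /\ hellinger x2 y2 <= hellinger x1 y1) ->
  (renyi al (ber x2) (ber y2) <= renyi al (ber x1) (ber y1))%E.
Proof.
move=> hx2 hy2 le_hellinger; rewrite !renyi_berE.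
have [ac1|_] := boolP (ber_ac x1 y1); last exact: leey.
have [ac2 le21] := le_hellinger ac1; have ge1 := hellinger_ge1 hx2 hy2 ac2.
by rewrite ac2 lee_fin ler_pM2l ?invr_gt0 ?subr_gt0 // ler_ln // posrE; lra.
Qed.

Lemma renyi_ber_le_nested x1 x2 y1 y2 :
  0 <= x1 -> x1 <= x2 -> x2 <= y2 -> y2 <= y1 -> y1 <= 1 ->
  (renyi al (ber x2) (ber y2) <= renyi al (ber x1) (ber y1))%E.
Proof.
move=> x10 x12 x2y2 y21 y11; apply: le_renyi_ber; [apply/andP; lra | apply/andP; lra |].
move=> /(hellinger_le_r x10 (le_trans x12 x2y2) y21 y11) [ac y_le].
have [ac' x_le] := hellinger_le_l x10 x12 x2y2 (le_trans y21 y11) ac.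
by split=> //; apply: le_trans y_le.
Qed.
End BernoulliHellinger.

Section ApproxRenyiBernoulli.
Variables (R : realType) (al d : R).
Hypotheses (al_gt1 : 1 < al) (d_ge0 : 0 <= d) (d_lt1 : d < 1).
Implicit Types p q x y : R.

Local Notation ra p q := (renyi_approx al d (ber p) (ber q)).

Lemma is_dist_ber x : 0 <= x <= 1 -> is_dist (ber x).
Proof. by move=> /andP[x0 x1]; split=> [[]|]; rewrite /= ?subr_ge0 ?subrKC. Qed.

Lemma is_dist_berE (P : bool -> R) : is_dist P -> P = ber (P true) /\ 0 <= P true <= 1.
Proof.
move=> [P0 P1]; split; first by apply: funext => -[] //=; rewrite -P1 addrC addKr.
by have := P0 false; have := P0 true; rewrite -P1 => *; apply/andP; lra.
Qed.

Lemma le_renyi_approx_ber (v : \bar R) p q :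
  (forall p1 p2 q1 q2, 0 <= p1 <= 1 -> 0 <= p2 <= 1 -> 0 <= q1 <= 1 -> 0 <= q2 <= 1 ->
    p = (1 - d) * p1 + d * p2 -> q = (1 - d) * q1 + d * q2 ->
    (v <= renyi al (ber p1) (ber q1))%E) ->
  (v <= ra p q)%E.
Proof.
move=> H; apply/ereal_infP => _ [P1 [P2 [Q1 [Q2 [[/is_dist_berE[-> hP1] /is_dist_berE[-> hP2]
  /is_dist_berE[-> hQ1] /is_dist_berE[-> hQ2]] [/(_ true) hp [/(_ true) hq ->]]]]]]].
exact: H hP1 hP2 hQ1 hQ2 hp hq.
Qed.

Lemma renyi_approx_ber_le p q p1 p2 q1 q2 :
  0 <= p1 <= 1 -> 0 <= p2 <= 1 -> 0 <= q1 <= 1 -> 0 <= q2 <= 1 ->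
  p = (1 - d) * p1 + d * p2 -> q = (1 - d) * q1 + d * q2 ->
  (ra p q <= renyi al (ber p1) (ber q1))%E.
Proof.
move=> hp1 hp2 hq1 hq2 hp hq; apply: ereal_inf_lbound.
exists (ber p1), (ber p2), (ber q1), (ber q2); split; first by split; apply: is_dist_ber.
by split; [|split]; [case=> /=; rewrite ?hp ?hq; ring..|].
Qed.

Lemma renyi_approx_ber_ge0 p q : (0 <= ra p q)%E.
Proof. by apply: le_renyi_approx_ber => *; apply: renyi_ber_ge0. Qed.

Lemma renyi_approx_ber_flip p q : ra p q = ra (1 - p) (1 - q).
Proof.
have le_flip p' q' : (ra (1 - p') (1 - q') <= ra p' q')%E.
  apply: le_renyi_approx_ber => p1 p2 q1 q2 hp1 hp2 hq1 hq2 hp hq.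
  rewrite renyi_ber_flip; apply: (renyi_approx_ber_le (p2 := 1 - p2) (q2 := 1 - q2));
    rewrite ?hp ?hq; try ring; apply/andP; lra.
by apply/le_anti; rewrite le_flip andbT -{1}(subKr 1 p) -{1}(subKr 1 q) le_flip.
Qed.

Lemma renyi_approx_ber_lt p q : 0 <= p <= 1 -> 0 <= q <= 1 -> p < q - d ->
  ra p q = renyi al (ber (p / (1 - d))) (ber ((q - d) / (1 - d))).
Proof.
move=> /andP[p0 _] /andP[q0 q_le1] pqd; have k0 : 0 < 1 - d by rewrite subr_gt0.
have ps0 : 0 <= p / (1 - d) by rewrite divr_ge0 // ltW.
have qs1 : (q - d) / (1 - d) <= 1 by rewrite ler_pdivrMr // mul1r; lra.
have psqs : p / (1 - d) <= (q - d) / (1 - d) by rewrite ler_wpM2r ?invr_ge0 ?ltW //; lra.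
apply/le_anti/andP; split.
  apply: (renyi_approx_ber_le (p2 := 0) (q2 := 1)).
  - by apply/andP; split; last exact: le_trans psqs qs1.
  - by rewrite lexx ler01.
  - by apply/andP; split; first exact: le_trans psqs.
  - by rewrite lexx ler01.
  - by rewrite mulr0 addr0 mulrC divfK ?gt_eqF.
  - by rewrite mulr1 mulrC divfK ?gt_eqF // subrK.
apply: le_renyi_approx_ber => p1 p2 q1 q2 /andP[p10 _] /andP[p20 _] /andP[_ q11] /andP[_ q21] hp hq.
apply: (renyi_ber_le_nested al_gt1) => //.
- by rewrite ler_pdivlMr // mulrC hp lerDl mulr_ge0.
- by rewrite ler_pdivrMr // hq; have := ler_wpM2l d_ge0 q21; lra.
Qed.

Lemma renyi_approx_ber_gt p q : 0 <= p <= 1 -> 0 <= q <= 1 -> q + d < p ->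
  ra p q = renyi al (ber ((p - d) / (1 - d))) (ber (q / (1 - d))).
Proof.
move=> /andP[p0 p1] /andP[q0 q1] qdp; have dn1 : 1 - d != 0 by rewrite gt_eqF // subr_gt0.
rewrite renyi_approx_ber_flip renyi_approx_ber_lt; try (apply/andP; lra); last lra.
rewrite renyi_ber_flip; congr (renyi _ (ber _) (ber _)); field => //.
Qed.

Lemma renyi_approx_ber_near p q : 0 <= p <= 1 -> 0 <= q <= 1 -> `|p - q| <= d -> ra p q = 0%E.
Proof.
move=> /andP[p0 p1] /andP[q0 q1]; rewrite ler_norml => /andP[dqp pqd].
have k0 : 0 < 1 - d by rewrite subr_gt0.
apply/le_anti; rewrite renyi_approx_ber_ge0 andbT.
have [e [he hpe hqe]] : exists e : R, [/\ 0 <= e <= 1 - d, 0 <= p - e <= d & 0 <= q - e <= d].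
  have [pq|qp] := leP p q.
    by have [qd|dq] := leP q d; [exists 0 | exists (q - d)]; split; apply/andP; split; lra.
  by have [pd|dp] := leP p d; [exists 0 | exists (p - d)]; split; apply/andP; split; lra.
have residual (a : R) : 0 <= a - e <= d -> 0 <= (a - e) / d <= 1 /\ d * ((a - e) / d) = a - e.
  (* for d = 0 the residual a - e vanishes, so the junk value (a - e) / 0 = 0 is harmless *)
  move=> /andP[ae0 aed]; have [d0|dn0] := eqVneq d 0.
    by rewrite d0 invr0 !mul0r mulr0 lexx ler01; split=> //; rewrite d0 in aed; lra.
  have dp : 0 < d by rewrite lt0r dn0.
  by rewrite divr_ge0 // ler_pdivrMr // mul1r aed mulrC divfK.
have [hp2 dp2] := residual p hpe; have [hq2 dq2] := residual q hqe.
have hc : 0 <= e / (1 - d) <= 1.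
  by case/andP: he => e0 e1; rewrite divr_ge0 ?ler_pdivrMr ?mul1r // ltW.
rewrite -(renyi_ber_diag al hc); apply: (renyi_approx_ber_le hc hp2 hc hq2).
- by rewrite dp2 mulrC divfK ?gt_eqF // subrKC.
- by rewrite dq2 mulrC divfK ?gt_eqF // subrKC.
Qed.

Lemma renyi_approx_ber_le_nested x1 x2 y1 y2 :
  0 <= x1 -> x1 <= x2 -> x2 <= y2 -> y2 <= y1 -> y1 <= 1 -> (ra x2 y2 <= ra x1 y1)%E.
Proof.
move=> x10 x12 x2y2 y21 y11; have k0 : 0 < 1 - d by rewrite subr_gt0.
have [near|far] := leP (y2 - x2) d.
  rewrite renyi_approx_ber_near ?renyi_approx_ber_ge0 //; try (apply/andP; lra).
  by rewrite distrC ger0_norm // subr_ge0.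
have [hx1 hx2 hy2 hy1] : [/\ 0 <= x1 <= 1, 0 <= x2 <= 1, 0 <= y2 <= 1 & 0 <= y1 <= 1].
  by split; apply/andP; split; lra.
rewrite (renyi_approx_ber_lt hx2 hy2) ?(renyi_approx_ber_lt hx1 hy1); [|lra..].
have div_le a b : a <= b -> a / (1 - d) <= b / (1 - d).
  by move=> ab; rewrite ler_wpM2r // invr_ge0 ltW.
apply: (renyi_ber_le_nested al_gt1); try (apply: div_le; lra).
- by rewrite divr_ge0 // ltW.
- by rewrite ler_pdivrMr // mul1r; lra.
Qed.

Lemma renyi_approx_ber_le_nested_flip x1 x2 y1 y2 :
  0 <= y1 -> y1 <= y2 -> y2 <= x2 -> x2 <= x1 -> x1 <= 1 -> (ra x2 y2 <= ra x1 y1)%E.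
Proof.
move=> *; rewrite [X in (X <= _)%E]renyi_approx_ber_flip [X in (_ <= X)%E]renyi_approx_ber_flip.
by apply: renyi_approx_ber_le_nested; lra.
Qed.

End ApproxRenyiBernoulli.

Theorem mainTheorem2 (R : realType) (alpha delta : R) :
  1 < alpha -> 0 <= delta -> delta < 1 ->
  (forall p q : R, 0 <= p <= 1 -> 0 <= q <= 1 ->
     (p < q - delta ->
        renyi_approx alpha delta (ber p) (ber q)
        = renyi alpha (ber (p / (1 - delta))) (ber ((q - delta) / (1 - delta)))) /\
     (p > q + delta ->
        renyi_approx alpha delta (ber p) (ber q)
        = renyi alpha (ber ((p - delta) / (1 - delta))) (ber (q / (1 - delta)))) /\
     (`|p - q| <= delta -> renyi_approx alpha delta (ber p) (ber q) = 0%E)) /\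
  (forall p q1 q2 : R, 0 <= p <= 1 ->
     (0 <= q1 -> q1 <= q2 -> q2 <= p ->
        (renyi_approx alpha delta (ber p) (ber q2)
         <= renyi_approx alpha delta (ber p) (ber q1))%E) /\
     (p <= q1 -> q1 <= q2 -> q2 <= 1 ->
        (renyi_approx alpha delta (ber p) (ber q1)
         <= renyi_approx alpha delta (ber p) (ber q2))%E)) /\
  (forall q p1 p2 : R, 0 <= q <= 1 ->
     (0 <= p1 -> p1 <= p2 -> p2 <= q ->
        (renyi_approx alpha delta (ber p2) (ber q)
         <= renyi_approx alpha delta (ber p1) (ber q))%E) /\
     (q <= p1 -> p1 <= p2 -> p2 <= 1 ->
        (renyi_approx alpha delta (ber p1) (ber q)
         <= renyi_approx alpha delta (ber p2) (ber q))%E)).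
Proof.
move=> al1 d0 d1; split; [|split].
- move=> p q hp hq; split; first exact: renyi_approx_ber_lt.
  by split; [exact: renyi_approx_ber_gt | exact: renyi_approx_ber_near].
- move=> p q1 q2 /andP[p0 p1]; split=> *.
  + by apply: renyi_approx_ber_le_nested_flip => //; lra.
  + by apply: renyi_approx_ber_le_nested => //; lra.
- move=> q p1 p2 /andP[q0 q1]; split=> *.
  + by apply: renyi_approx_ber_le_nested => //; lra.
  + by apply: renyi_approx_ber_le_nested_flip => //; lra.
Qed.
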